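(* Let $X$ be a finite set and let $c$ be a choice correspondence on $X$ that admits a minimal compromise representation. Then $c$ satisfies axiom $\beta$: for all $x,y\in X$ and menus $A\subset B$, if $x,y\in A$, $x,y\in c(A)$ and $y\in c(B)$, then $x\in c(B)$. However, $c$ need not satisfy axiom $\alpha$: there exists a choice correspondence admitting a minimal compromise representation and menus $B\subset A$ and $x\in B$ with $x\in c(A)$ but $x\notin c(B)$.
   Context: A menu is a nonempty subset of $X$. A choice correspondence is a map $c$ assigning to each menu $A$ a nonempty subset $c(A)\subseteq A$. A weak order is a complete and transitive binary relation on $X$; a linear order is an antisymmetric weak order. For a weak order $R$ and menu $A$, $\max(A,R)=\{x\in A: xRy \text{ for all } y\in A\}$. For a linear order $L$, $\min(A,L)$ denotes the unique $x\in A$ with $yLx$ for all $y\in A$. A choice correspondence $c$ admits a minimal compromise representation if there exist a weak order $R$ and a linear order $L$ on $X$ such that for every menu $A$: $c(A)=\max(A,R)$ if $\max(A,R)$ is a singleton, and $c(A)=\max(A,R)\setminus\{\min(\max(A,R),L)\}$ otherwise. *)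

From mathcomp Require Import all_boot.
Set Implicit Arguments. Unset Strict Implicit. Unset Printing Implicit Defensive.

Section Defs.
Variable X : finType.

Definition menu (A : {set X}) : Prop := A != set0.

Definition choice_corr (c : {set X} -> {set X}) : Prop :=
  forall A : {set X}, menu A -> c A != set0 /\ c A \subset A.

Definition complete (R : rel X) : Prop := forall x y, R x y || R y x.
Definition transitive_rel (R : rel X) : Prop := forall x y z, R x y -> R y z -> R x z.
Definition weak_order (R : rel X) : Prop := complete R /\ transitive_rel R.
Definition linear_order (L : rel X) : Prop :=
  weak_order L /\ (forall x y, L x y -> L y x -> x = y).

Definition maxR (A : {set X}) (R : rel X) : {set X} :=
  [set x in A | [forall y in A, R x y]].

(* the set of L-minimal elements of A: {x in A | y L x for all y in A};
   for a linear order L and nonempty A it is the singleton {min(A,L)}. *)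
Definition minL (A : {set X}) (L : rel X) : {set X} :=
  [set x in A | [forall y in A, L y x]].

Definition compromise (R L : rel X) (A : {set X}) : {set X} :=
  let M := maxR A R in
  if #|M| == 1 then M else M :\: minL M L.

Definition minimal_compromise_rep (c : {set X} -> {set X}) : Prop :=
  exists R L : rel X, weak_order R /\ linear_order L /\
    forall A : {set X}, menu A -> c A = compromise R L A.

Definition axiom_beta (c : {set X} -> {set X}) : Prop :=
  forall (x y : X) (A B : {set X}), A \subset B ->
    x \in A -> y \in A -> x \in c A -> y \in c A -> y \in c B -> x \in c B.

Definition axiom_alpha (c : {set X} -> {set X}) : Prop :=
  forall (x : X) (A B : {set X}), B \subset A -> x \in B -> x \in c A -> x \in c B.

End Defs.

(* If two distinct alternatives x, y are chosen from A, both are R-maximal in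
   A and x is not the L-worst element of max(A,R).  If y is still chosen from
   a larger menu B, then y is R-maximal in B, so by transitivity every
   R-maximal element of A is R-maximal in B.  Hence max(B,R) has at least two
   elements, and x, not L-worst in the smaller set max(A,R), is not L-worst in
   max(B,R) either: x is chosen from B.  Axiom alpha already fails under
   universal indifference on three alternatives, where the rule just drops the
   L-worst alternative: the second-worst alternative of A is chosen from A but
   is the worst of a two-element submenu. *)

From mathcomp Require Import all_boot.

Set Implicit Arguments.
Unset Strict Implicit.
Unset Printing Implicit Defensive.

Section Compromise.
Variables (X : finType) (R L : rel X).

Lemma maxR_sub (A : {set X}) : maxR A R \subset A.
Proof. by apply/subsetP => x; rewrite inE => /andP[]. Qed.

Lemma compromise_sub_maxR (A : {set X}) : compromise R L A \subset maxR A R.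
Proof. by rewrite /compromise; case: ifP => _; [exact: subxx | exact: subsetDl]. Qed.

Lemma compromiseD (A : {set X}) (x y : X) :
  x != y -> x \in maxR A R -> y \in maxR A R ->
  compromise R L A = maxR A R :\: minL (maxR A R) L.
Proof.
move=> neq_xy xM yM; rewrite /compromise gtn_eqF //.
by apply/card_gt1P; exists x, y.
Qed.

Lemma minL_subset (M N : {set X}) : M \subset N -> M :&: minL N L \subset minL M L.
Proof.
move=> sMN; apply/subsetP => x; rewrite inE /minL !inE => /andP[xM /andP[_ minx]].
rewrite xM; apply/forall_inP => y yM.
by move/forall_inP: minx; apply; exact: subsetP sMN y yM.
Qed.

Lemma minL_card_le1 (M : {set X}) :
  (forall x y, L x y -> L y x -> x = y) -> #|minL M L| <= 1.
Proof.
move=> antiL; apply/card_le1_eqP => x y; rewrite /minL !inE.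
move=> /andP[xM /forall_inP minx] /andP[yM /forall_inP miny].
by apply: antiL; [exact: minx | exact: miny].
Qed.

Lemma maxR_subset (A B : {set X}) (y : X) : transitive_rel R ->
  A \subset B -> y \in A -> y \in maxR B R -> maxR A R \subset maxR B R.
Proof.
move=> transR sAB yA; rewrite inE => /andP[_ /forall_inP maxy].
apply/subsetP => z; rewrite !inE => /andP[zA /forall_inP maxz].
rewrite (subsetP sAB z zA); apply/forall_inP => w wB.
exact: transR (maxz y yA) (maxy w wB).
Qed.

(* A maximizer of the number of alternatives it weakly beats is R-maximal. *)
Lemma maxR_neq0 (A : {set X}) : weak_order R -> A != set0 -> maxR A R != set0.
Proof.
move=> [completeR transR] /set0Pn[x0 Ax0].
pose beaten x := [set y in A | R x y].
have [x Ax most_x] := @arg_maxnP _ x0 (mem A) (fun x => #|beaten x|) Ax0.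
apply/set0Pn; exists x; rewrite inE; apply/andP; split=> //; apply/forall_inP => y Ay.
apply/negPn/negP => notRxy.
have Ryx : R y x by move: (completeR x y); rewrite (negbTE notRxy).
have : #|beaten x| < #|beaten y|.
  apply/proper_card/properP; split.
    by apply/subsetP => z; rewrite !inE => /andP[-> /(transR _ _ _ Ryx)].
  exists y; last by rewrite inE (negbTE notRxy) andbF.
  by rewrite inE Ay; move: (completeR y y); rewrite orbb.
by rewrite ltnNge; have /= -> := most_x y Ay.
Qed.

Lemma compromise_choice_corr :
  weak_order R -> linear_order L -> choice_corr (compromise R L).
Proof.
move=> wR [_ antiL] A /(maxR_neq0 wR) M_neq0.
split; last exact: subset_trans (compromise_sub_maxR A) (maxR_sub A).
rewrite /compromise; set M := maxR A R; case: ifP => // M_not1.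
have M_gt1 : 1 < #|M| by rewrite ltn_neqAle eq_sym M_not1 card_gt0.
rewrite -card_gt0 cardsD subn_gt0; apply: leq_ltn_trans M_gt1.
exact: leq_trans (subset_leq_card (subsetIr _ _)) (minL_card_le1 M antiL).
Qed.

Lemma compromise_beta : transitive_rel R -> axiom_beta (compromise R L).
Proof.
move=> transR x y A B sAB xA yA xcA ycA ycB.
have [->//|neq_xy] := eqVneq x y.
have inMA := subsetP (compromise_sub_maxR A).
have yMB := subsetP (compromise_sub_maxR B) y ycB.
have sMAB := maxR_subset transR sAB yA yMB.
have xMA := inMA x xcA.
have xMB := subsetP sMAB x xMA.
rewrite (compromiseD neq_xy xMA (inMA y ycA)) in_setD xMA andbT in xcA.
rewrite (compromiseD neq_xy xMB yMB) in_setD xMB andbT; apply: contra xcA => minx.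
by apply: (subsetP (minL_subset sMAB)); rewrite inE minx xMA.
Qed.

End Compromise.

Lemma minimal_compromise_rep_beta (X : finType) (c : {set X} -> {set X}) :
  minimal_compromise_rep c -> axiom_beta c.
Proof.
move=> [R [L [[_ transR] [_ cE]]]] x y A B sAB xA yA.
have mA : menu A by apply/set0Pn; exists x.
have mB : menu B by apply/set0Pn; exists x; exact: subsetP sAB x xA.
rewrite !cE //; exact: compromise_beta.
Qed.

Definition indifference : rel 'I_3 := fun _ _ => true.
(* Under [natural_order] the L-worst element of a menu is its numerically
   largest one, so [inord 1] is dropped from [set ord0; inord 1] only. *)
Definition natural_order : rel 'I_3 := fun x y => x <= y.

Lemma indifference_weak_order : weak_order indifference.
Proof. by []. Qed.

Lemma natural_order_linear : linear_order natural_order.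
Proof.
split; first by split=> [x y | x y z]; [exact: leq_total | exact: leq_trans].
by move=> x y Lxy Lyx; apply/val_inj/eqP; rewrite eqn_leq; apply/andP.
Qed.

Lemma maxR_indifference (A : {set 'I_3}) : maxR A indifference = A.
Proof. by apply/setP => x; rewrite inE andb_idr // => _; apply/forall_inP. Qed.

Definition compromise3 := compromise indifference natural_order.

Lemma inord1_neq0 : inord 1 != ord0 :> 'I_3.
Proof. by apply/eqP => /(congr1 val); rewrite /= inordK. Qed.

Lemma compromise3_alpha_failure (one := inord 1 : 'I_3) :
  one \in compromise3 setT /\ one \notin compromise3 [set ord0; one].
Proof.
have one01 : one \in [set ord0; one] by rewrite !inE eqxx orbT.
have zero01 : ord0 \in [set ord0; one] by rewrite !inE eqxx.
rewrite /compromise3 !(compromiseD natural_order inord1_neq0) ?maxR_indifference //.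
rewrite !in_setD one01 in_setT !andbT negbK.
split; rewrite /minL inE ?in_setT ?one01 /=; apply/forall_inP.
  by move=> /(_ ord_max (in_setT _)); rewrite /natural_order /= inordK.
by move=> y; rewrite !inE => /orP[] /eqP ->; rewrite /natural_order /= inordK.
Qed.

Theorem lemma1 :
  (forall (X : finType) (c : {set X} -> {set X}),
      choice_corr c -> minimal_compromise_rep c -> axiom_beta c) /\
  (exists (X : finType) (c : {set X} -> {set X}),
      choice_corr c /\ minimal_compromise_rep c /\
      exists (A B : {set X}) (x : X),
        B \subset A /\ x \in B /\ x \in c A /\ x \notin c B).
Proof.
split=> [X c _|]; first exact: minimal_compromise_rep_beta.
have [weakR linL] := (indifference_weak_order, natural_order_linear).
exists 'I_3, compromise3; split; first exact: compromise_choice_corr.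
split; first by exists indifference, natural_order.
have [one_cT one_notin] := compromise3_alpha_failure.
by exists setT, [set ord0; inord 1], (inord 1); rewrite subsetT !inE eqxx orbT.
Qed.
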